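(* Consider a run of the algorithm described in the context, and assume the event $\mathcal E$ occurs. Then for every iteration $j$ of the run, $\mathcal G_j^*:=\mathcal G^*\cap\mathcal G_j\neq\emptyset$, where $\mathcal G^*=\{G\in\mathcal G_{d,k}:\mathcal S(G)=\mathcal S^*\}$.
   Context: Setting. $\mathbf{X}=(X_1,\dots,X_d)$ is a random vector; $k$ a fixed positive integer; natural logarithms. A family is $f=\langle X_i,\Pi\rangle$ with $\Pi\subseteq\{X_1,\dots,X_d\}\setminus\{X_i\}$, $|\Pi|\le k$; $\mathcal F_{d,k}$ the set of families; $H(f)=H(X_i\mid\Pi)$. $\mathcal G_{d,k}$ = DAGs over the variables with in-degree $\le k$, identified with their family sets; $\mathcal S(F)=-\sum_{f\in F}H(f)$; $\mathcal S^*=\max_{G\in\mathcal G_{d,k}}\mathcal S(G)$. $\mathcal E_{d,k}$ is the set of Markov equivalence classes (ECs) on $\mathcal G_{d,k}$ (graphs with identical conditional independence constraints); graphs in an EC share a score. Each sample is an independent copy of $\mathbf X$ of which only a chosen set of $k+1$ coordinates is revealed. $\hat H$ is an estimator of $H(f)$ from the samples where all variables of $f$ were observed, and $N(\epsilon,\delta)$ is such that for any fixed $f$, at least $N(\epsilon,\delta)$ such samples give $|\hat H(f)-H(f)|\le\epsilon$ with probability $\ge1-\delta$. Notation: $\mathcal F_{\mathrm{act}}(\mathcal V)$ = families whose child is not in $\mathcal V\subseteq[d]$; $\mathcal G_j=\{G\in\mathcal G_{d,k}:\mathcal A_j\subseteq G\}$; $E^{(j)}=E\cap\mathcal G_j$;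 $U(\mathcal A)=\bigcup_{G\in\mathcal A}G$; $\hat H_t(f)$ = estimate from all samples up to round $t$; $\hat{\mathcal S}_t(G)=-\sum_{f\in G}\hat H_t(f)$; $\hat{\mathcal S}_t(\mathcal A)=\max_{G\in\mathcal A}\hat{\mathcal S}_t(G)$. Algorithm (inputs $d,k,\delta\in(0,1),\epsilon,\epsilon_1>0$). Initialize $\mathcal A_1=\emptyset,\mathcal V=\emptyset,N_0=0,t=1,j=1,T=\lceil\log_2(2d\epsilon_1/\epsilon)\rceil$. While $\epsilon_t>\epsilon/(d-|\mathcal V|)$ (a ''round'' $t$): $N_t=N(\epsilon_t/2,\delta/(T|\mathcal F_{\mathrm{act}}(\mathcal V)|))$; observe each $(k+1)$-subset of $[d]$ not contained in $\mathcal V$ in $N_t-N_{t-1}$ new samples; repeat the following ''iteration'' until $\mathcal A_j=\mathcal A_{j-1}$: $\theta_j=(d-|\mathcal V|)\epsilon_t$; $\hat G_j\in\arg\max_{G\in\mathcal G_j}\hat{\mathcal S}_t(G)$, $\hat E_j$ its EC; $L_j=\{E\in\mathcal E_{d,k}:E^{(j)}\neq\emptyset,\hat{\mathcal S}_t(\hat E_j^{(j)})-\hat{\mathcal S}_t(E^{(j)})\le\theta_j\}$; if some $f\in U(\hat E_j^{(j)})\cap\mathcal F_{\mathrm{act}}(\mathcal V)$ satisfies $f\in U(E^{(j)})$ for all $E\in L_j$, accept one such $f=\langle X_v,\Pi\rangle$: $\mathcal V\leftarrow\mathcal V\cup\{v\}$, $\mathcal A_{j+1}=\mathcal A_j\cup\{f\}$;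 else $\mathcal A_{j+1}=\mathcal A_j$; $j\leftarrow j+1$. After the iterations, if $|\mathcal V|=d$ return $\mathcal A_j$; else $t\leftarrow t+1$, $\epsilon_t=\epsilon_{t-1}/2$. After the while loop: $\epsilon_{\mathrm{last}}=\epsilon/(d-|\mathcal V|)$, $N_T=N(\epsilon_{\mathrm{last}}/2,\delta/(T|\mathcal F_{\mathrm{act}}(\mathcal V)|))$, observe remaining subsets in $N_T-N_{T-1}$ more samples, return a maximizer of $\hat{\mathcal S}_T$ over $\mathcal G_j$. Event: with $\mathcal V_t$ the value of $\mathcal V$ at the start of round $t$, $\mathcal E:=\{\forall t\in[T],\forall f\in\mathcal F_{\mathrm{act}}(\mathcal V_t): |\hat H_t(f)-H(f)|\le\epsilon_t/2\}$. *)

From HB Require Import structures.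
From mathcomp Require Import all_boot all_order all_algebra.
From mathcomp Require Import boolp classical_sets reals ereal exp.
Set Implicit Arguments. Unset Strict Implicit. Unset Printing Implicit Defensive.
Import Order.TTheory GRing.Theory Num.Theory.
Local Open Scope ring_scope.

(* A family <X_i, Pi> is the pair (i, Pi). *)
Definition fam (d : nat) := ('I_d * {set 'I_d})%type.
Definition valid_fam (d k : nat) (f : fam d) : bool :=
  (f.1 \notin f.2) && (#|f.2| <= k)%N.
(* A graph is identified with its set of families. *)
Definition graph (d : nat) := {set fam d}.
Definition parent_rel (d : nat) (G : graph d) : rel 'I_d :=
  fun j i => [exists f in G, (f.1 == i) && (j \in f.2)].
Definition is_dag (d k : nat) (G : graph d) : bool :=
  [&& [forall f in G, valid_fam k f],
      [forall i : 'I_d, #|[set f in G | f.1 == i]| == 1%N] &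
      [forall i : 'I_d, forall j : 'I_d,
          parent_rel G j i ==> ~~ connect (parent_rel G) i j]].

Definition adj (d : nat) (G : graph d) : rel 'I_d :=
  fun u v => parent_rel G u v || parent_rel G v u.
Definition collider (d : nat) (G : graph d) (u v w : 'I_d) : bool :=
  parent_rel G u v && parent_rel G w v.
Definition active_trail (d : nat) (G : graph d) (C : {set 'I_d})
    (a : 'I_d) (s : seq 'I_d) : bool :=
  let p := a :: s in
  [&& path (adj G) a s, uniq p &
      all (fun n => let u := nth a p n.-1 in let v := nth a p n in
                    let w := nth a p n.+1 in
                    if collider G u v w
                    then [exists x in C, connect (parent_rel G) v x]
                    else v \notin C)
          (iota 1 (size s).-1)].
Definition d_connected (d : nat) (G : graph d) (C : {set 'I_d}) (a b : 'I_d)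
  : Prop := exists s, active_trail G C a s /\ last a s = b.
Definition d_separated (d : nat) (G : graph d) (C : {set 'I_d}) (a b : 'I_d)
  : Prop := ~ d_connected G C a b.
(* identical conditional independence constraints X_a _||_ X_b | X_C *)
Definition markov_equiv (d : nat) (G1 G2 : graph d) : Prop :=
  forall (a b : 'I_d) (C : {set 'I_d}), a != b -> a \notin C -> b \notin C ->
    (d_separated G1 C a b <-> d_separated G2 C a b).

(* X : 'I_d -> Omega -> T on a finite probability space (Omega, P). *)
Definition is_pmf (R : realType) (Omega : finType) (P : Omega -> R) : Prop :=
  (forall w, 0 <= P w) /\ \sum_(w : Omega) P w = 1.
Definition key (d : nat) (Omega T : finType) (X : 'I_d -> Omega -> T)
    (S : {set 'I_d}) (w : Omega) : {ffun 'I_d -> option T} :=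
  [ffun i => if i \in S then Some (X i w) else None].
Definition marg (R : realType) (d : nat) (Omega T : finType) (P : Omega -> R)
    (X : 'I_d -> Omega -> T) (S : {set 'I_d}) (kv : {ffun 'I_d -> option T}) : R :=
  \sum_(w | key X S w == kv) P w.
Definition joint_entropy (R : realType) (d : nat) (Omega T : finType)
    (P : Omega -> R) (X : 'I_d -> Omega -> T) (S : {set 'I_d}) : R :=
  - \sum_(kv : {ffun 'I_d -> option T}) marg P X S kv * ln (marg P X S kv).
Definition cond_entropy (R : realType) (d : nat) (Omega T : finType)
    (P : Omega -> R) (X : 'I_d -> Omega -> T) (f : fam d) : R :=
  joint_entropy P X (f.1 |: f.2) - joint_entropy P X f.2.

Definition score (R : realType) (d : nat) (h : fam d -> R) (F : graph d) : R :=
  - \sum_(f in F) h f.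
(* max of s over the (finite) set of graphs satisfying Q; -oo if empty *)
Definition emax (R : realType) (d : nat) (Q : graph d -> Prop)
    (s : graph d -> R) : \bar R :=
  \big[Order.max/-oo%E]_(G : graph d | `[< Q G >]) ((s G)%:E).

Definition chld (d : nat) (A : graph d) : {set 'I_d} := [set f.1 | f in A].
Definition active_fam (d k : nat) (V : {set 'I_d}) (f : fam d) : bool :=
  valid_fam k f && (f.1 \notin V).
Definition Gj (d k : nat) (A : graph d) (G : graph d) : bool :=
  is_dag k G && (A \subset G).
Definition ec_j (d k : nat) (A : graph d) (G0 : graph d) : graph d -> Prop :=
  fun G => Gj k A G /\ markov_equiv G0 G.
Definition inU (d : nat) (Q : graph d -> Prop) (f : fam d) : Prop :=
  exists G, Q G /\ f \in G.
Definition epst (R : realType) (eps1 : R) (t : nat) : R := eps1 / 2 ^+ t.-1.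
Definition while_ok (R : realType) (d : nat) (eps eps1 : R) (t : nat)
    (V : {set 'I_d}) : Prop :=
  (#|V| < d)%N /\ eps / (d - #|V|)%:R < epst eps1 t.
(* f may be accepted in an iteration with current A = A_j, estimates h,
   threshold theta, and chosen maximizer Ghat (whose class is Ehat_j) *)
Definition acceptable (R : realType) (d k : nat) (h : fam d -> R) (theta : R)
    (A : graph d) (Ghat : graph d) (f : fam d) : Prop :=
  [/\ inU (ec_j k A Ghat) f, active_fam k (chld A) f &
      forall G0, is_dag k G0 -> (exists G, ec_j k A G0 G) ->
        (emax (ec_j k A Ghat) (score h) - emax (ec_j k A G0) (score h)
           <= theta%:E)%E ->
        inU (ec_j k A G0) f].

(* A prefix of a run up to (the start of) iteration J:
   A j = A_j, rd j = round of iteration j, Ghat j = chosen maximizer. *)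
Definition run_prefix (R : realType) (d k : nat) (eps eps1 : R)
    (Hhat : nat -> fam d -> R) (J : nat) (A : nat -> graph d)
    (rd : nat -> nat) (Ghat : nat -> graph d) : Prop :=
  [/\ A 1%N = finset.set0, rd 1%N = 1%N, while_ok eps eps1 1 (chld (A 1%N)) &
      forall j, (1 <= j < J)%N ->
        let t := rd j in
        let V := chld (A j) in
        let theta := (d - #|V|)%:R * epst eps1 t in
        [/\ Gj k (A j) (Ghat j),
            (forall G, Gj k (A j) G -> score (Hhat t) G <= score (Hhat t) (Ghat j)) &
            (exists f, acceptable k (Hhat t) theta (A j) (Ghat j) f
                       /\ A j.+1 = f |: A j /\ rd j.+1 = t)
            \/ ((forall f, ~ acceptable k (Hhat t) theta (A j) (Ghat j) f)
                /\ A j.+1 = A j /\ rd j.+1 = t.+1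
                /\ while_ok eps eps1 t.+1 V)]].

(* The event E, restricted to the rounds started up to iteration J:
   a round starts at iteration j iff j = 1 or rd (j-1) < rd j, and then
   V_t = chld (A j). *)
Definition event_E (R : realType) (d k : nat) (eps1 : R) (H : fam d -> R)
    (Hhat : nat -> fam d -> R) (J : nat) (A : nat -> graph d)
    (rd : nat -> nat) : Prop :=
  forall j, (1 <= j <= J)%N -> (j == 1%N) || (rd j.-1 < rd j)%N ->
    forall f, active_fam k (chld (A j)) f ->
      `|Hhat (rd j) f - H f| <= epst eps1 (rd j) / 2.

From HB Require Import structures.
From mathcomp Require Import all_boot all_order all_algebra.
From mathcomp Require Import boolp classical_sets reals ereal exp.
From mathcomp Require Import zify lra.
Import Order.TTheory GRing.Theory Num.Theory.
Set Implicit Arguments. Unset Strict Implicit. Unset Printing Implicit Defensive.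

(* Under the event E every estimate of an active family is eps_t/2-accurate,
   while the families of already settled children are shared by all graphs in
   G_j.  Hence for an optimal G in G_j the estimated score of the chosen
   maximizer exceeds that of G by at most (d - |V|) eps_t = theta_j, so the
   class of G is in L_j and an accepted family lies in some member G' of that
   class extending A_j.  G' is optimal as well, because the entropy score
   sum_i H(X_i, Pa_i) - H(Pa_i) is score equivalent: Markov equivalent DAGs
   share skeleton and v-structures (their local Markov separators witness
   this), such DAGs are linked by covered edge reversals (Chickering), and a
   covered reversal leaves every sum of family terms unchanged. *)

Section DagStructure.
Variables (d k : nat) (G : graph d).
Hypothesis dG : is_dag k G.

Definition parents (i : 'I_d) : {set 'I_d} := [set j | parent_rel G j i].
Definition ancestors (i : 'I_d) : {set 'I_d} := [set j | connect (parent_rel G) j i].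

Lemma in_parents j i : (j \in parents i) = parent_rel G j i.
Proof. by rewrite inE. Qed.

Lemma dag_valid f : f \in G -> valid_fam k f.
Proof. by case/and3P: dG => /forall_inP validG _ _; apply: validG. Qed.

Lemma dag_fam_of i : exists g, [set f in G | f.1 == i] = [set g].
Proof. by case/and3P: dG => _ /forallP /(_ i) /cards1P. Qed.

Lemma dag_fam_inj f g : f \in G -> g \in G -> f.1 = g.1 -> f = g.
Proof.
move=> fG gG fg; have [x Ex] := dag_fam_of f.1.
have : f \in [set h in G | h.1 == f.1] by rewrite inE fG eqxx.
have : g \in [set h in G | h.1 == f.1] by rewrite inE gG fg eqxx.
by rewrite Ex !inE => /eqP -> /eqP ->.
Qed.

Lemma dag_famE f : f \in G -> f = (f.1, parents f.1).
Proof.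
case: f => i S fG /=; congr pair; apply/setP => j.
rewrite inE; apply/idP/existsP => [jS | [g /and3P [gG /eqP gi jg]]].
  by exists (i, S); rewrite fG eqxx jS.
by move: jg; rewrite (dag_fam_inj gG fG gi).
Qed.

Lemma dag_parents_fam i : (i, parents i) \in G.
Proof.
have [g Eg] := dag_fam_of i.
have : g \in [set f in G | f.1 == i] by rewrite Eg set11.
by rewrite inE => /andP [gG /eqP <-]; rewrite -dag_famE.
Qed.

Lemma dag_imset : G = [set (i, parents i) | i : 'I_d].
Proof.
apply/setP => f; apply/idP/imsetP => [fG | [i _ ->]]; last exact: dag_parents_fam.
by exists f.1; rewrite // {1}(dag_famE fG).
Qed.

Lemma parent_irrefl i : ~~ parent_rel G i i.
Proof.
by rewrite -in_parents; case/andP: (dag_valid (dag_parents_fam i)).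
Qed.

Lemma parent_acyclic j i : parent_rel G j i -> ~~ connect (parent_rel G) i j.
Proof. by case/and3P: dG => _ _ /forallP /(_ i) /forallP /(_ j) /implyP. Qed.

Lemma adj_neq a b : adj G a b -> a != b.
Proof. by apply: contraTneq => ->; rewrite /adj orbb parent_irrefl. Qed.

Lemma card_ancestors_lt j i : parent_rel G j i -> (#|ancestors j| < #|ancestors i|)%N.
Proof.
move=> ji; apply/proper_card/properP; split.
  by apply/fintype.subsetP => x; rewrite !inE => /connect_trans; apply; apply: connect1.
by exists i; rewrite !inE ?connect0 // (negbTE (parent_acyclic ji)).
Qed.

Lemma connect_antisym a b :
  connect (parent_rel G) a b -> connect (parent_rel G) b a -> a = b.
Proof.
case/connectP => p; elim/last_ind: p => [|p x _] /=; first by move=> _ ->.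
rewrite rcons_path last_rcons => /andP [ap px] -> xa.
have /negP[] := parent_acyclic px.
by apply: connect_trans xa _; apply/connectP; exists p.
Qed.

End DagStructure.

Definition unblocked d (G : graph d) (C : {set 'I_d}) (u v w : 'I_d) : bool :=
  if collider G u v w then [exists x in C, connect (parent_rel G) v x]
  else v \notin C.

Lemma unblockedC d (G : graph d) C u v w : unblocked G C u v w = unblocked G C w v u.
Proof. by rewrite /unblocked /collider andbC. Qed.

Lemma active_trail_nth d (G : graph d) C a s : active_trail G C a s ->
  (forall i, (i < size s)%N -> adj G (nth a (a :: s) i) (nth a (a :: s) i.+1)) /\
  (forall i, (0 < i < size s)%N ->
     unblocked G C (nth a (a :: s) i.-1) (nth a (a :: s) i) (nth a (a :: s) i.+1)).
Proof.
case/and3P => /(pathP a) adjs _ /allP oks; split => [i /adjs // | i i_s].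
by apply: oks; rewrite mem_iota; lia.
Qed.

Lemma d_connected_adj d (G : graph d) C a b : a != b -> adj G a b -> d_connected G C a b.
Proof. by move=> ab adj_ab; exists [:: b]; rewrite /active_trail /= adj_ab inE ab. Qed.

Section LocalMarkov.
Variables (d k : nat) (G : graph d).
Hypothesis dG : is_dag k G.

(* Along a trail from [v] that is unblocked by the parents of [v], every edge
   must point away from [v]: an edge into [v] meets a non-collider parent,
   and a later edge backwards creates a collider whose descendant in
   [parents v] would close a cycle. *)
Lemma parents_block_trail v u m (q : nat -> 'I_d) :
  (0 < m)%N -> q 0%N = v -> q m = u -> ~~ adj G u v ->
  ~~ connect (parent_rel G) v u ->
  (forall i, (i < m)%N -> adj G (q i) (q i.+1)) ->
  ~ (forall i, (0 < i < m)%N -> unblocked G (parents G v) (q i.-1) (q i) (q i.+1)).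
Proof.
move=> m0 q0 qm nuv nvu qadj qok.
have descend i : (i < m)%N ->
    parent_rel G (q i) (q i.+1) && connect (parent_rel G) v (q i.+1).
  elim: i => [|i IH] im.
    have := qadj 0%N im; rewrite q0 => /orP [vq1 | q1v]; first by rewrite vq1 connect1.
    have m1 : (1 < m)%N.
      by rewrite ltn_neqAle im andbT; apply: contra nuv => /eqP m1; rewrite -qm -m1 /adj q1v.
    have := qok 1%N m1; rewrite /unblocked /collider /= q0 in_parents q1v.
    by rewrite (negbTE (contra (@connect1 _ _ _ _) (parent_acyclic dG q1v))).
  have /andP [qi vqi] := IH (ltnW im).
  case/orP: (qadj i.+1 im) => [qi1 | qi2]; first by rewrite qi1 (connect_trans vqi (connect1 qi1)).
  have := qok i.+1 im; rewrite /unblocked /collider /= qi qi2 /=.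
  case/exists_inP => x; rewrite in_parents => xv qx.
  by have /negP[] := parent_acyclic dG xv; apply: connect_trans vqi qx.
have /andP [_] := descend m.-1 ltac:(by rewrite ltn_predL).
by rewrite prednK // qm (negbTE nvu).
Qed.

Lemma parents_dsep u v : u != v -> ~~ adj G u v -> ~~ connect (parent_rel G) v u ->
  d_separated G (parents G v) u v /\ d_separated G (parents G v) v u.
Proof.
move=> uv nuv nvu; split => -[s [act last_s]]; have [sadj sok] := active_trail_nth act.
- have s0 : (0 < size s)%N by case: s last_s {act sadj sok} => //= /eqP; rewrite (negbTE uv).
  apply: (@parents_block_trail v u (size s) (fun i => nth u (u :: s) (size s - i))) => //.
  + by rewrite subn0 -last_nth.
  + by rewrite subnn.
  + move=> i im; rewrite /adj orbC; have := sadj (size s - i.+1)%N.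
    by rewrite (_ : (size s - i.+1).+1 = size s - i)%N; [apply; lia | lia].
  + move=> i im; rewrite unblockedC; have := sok (size s - i)%N.
    rewrite (_ : (size s - i).-1 = size s - i.+1)%N; last by lia.
    by rewrite (_ : (size s - i).+1 = size s - i.-1)%N; [apply; lia | lia].
- have s0 : (0 < size s)%N by case: s last_s {act sadj sok} => //= /eqP; rewrite eq_sym (negbTE uv).
  apply: (@parents_block_trail v u (size s) (fun i => nth v (v :: s) i)) => //.
  by rewrite -last_nth.
Qed.

Lemma dsep_nonadjacent a b : a != b -> ~~ adj G a b ->
  exists C : {set 'I_d}, [/\ a \notin C, b \notin C,
    C \subset parents G a :|: parents G b & d_separated G C a b].
Proof.
move=> ab nab.
have na_b : b \notin parents G a by rewrite in_parents; apply: contra nab => ba; rewrite /adj ba orbT.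
have nb_a : a \notin parents G b by rewrite in_parents; apply: contra nab => ab'; rewrite /adj ab'.
case: (boolP (connect (parent_rel G) b a)) => ba.
  have nab' : ~~ connect (parent_rel G) a b.
    by apply/negP => /(connect_antisym dG) /(_ ba) eab; rewrite eab eqxx in ab.
  have ba' : b != a by rewrite eq_sym.
  have nba : ~~ adj G b a by rewrite /adj orbC.
  have [_ sep] := parents_dsep ba' nba nab'.
  exists (parents G a); split => //; last exact: finset.subsetUl.
  by rewrite in_parents (parent_irrefl dG).
have [sep _] := parents_dsep ab nab ba.
exists (parents G b); split => //; last exact: finset.subsetUr.
by rewrite in_parents (parent_irrefl dG).
Qed.

End LocalMarkov.

Lemma markov_equiv_refl d (G : graph d) : markov_equiv G G.
Proof. by []. Qed.

Lemma markov_equiv_sym d (G1 G2 : graph d) : markov_equiv G1 G2 -> markov_equiv G2 G1.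
Proof. by move=> eqG a b C ab aC bC; rewrite (eqG a b C ab aC bC). Qed.

Section MarkovEquivalence.
Variables (d k : nat) (G1 G2 : graph d).
Hypotheses (dG1 : is_dag k G1) (dG2 : is_dag k G2) (eqG : markov_equiv G1 G2).

Lemma markov_equiv_adj a b : adj G1 a b -> adj G2 a b.
Proof.
move=> adj_ab; have ab := adj_neq dG1 adj_ab.
apply/negPn/negP => nab; have [C [aC bC _ sep]] := dsep_nonadjacent dG2 ab nab.
exact: (proj2 (eqG ab aC bC) sep (d_connected_adj C ab adj_ab)).
Qed.

(* A separating set of parents of [a] or [b] cannot contain their common child
   [w], so a non-collider at [w] in [G2] would open the trail [a w b]. *)
Lemma markov_equiv_collider a w b : a != b -> ~~ adj G1 a b ->
  collider G1 a w b -> collider G2 a w b.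
Proof.
move=> ab nab /andP [aw bw].
have [C [aC bC CP sep]] := dsep_nonadjacent dG1 ab nab.
have wC : w \notin C.
  apply/negP => /(fintype.subsetP CP); rewrite finset.in_setU !in_parents.
  by case/orP => /connect1; apply/negP; apply: (parent_acyclic dG1).
apply/negPn/negP => ncol; apply: (proj1 (eqG ab aC bC) sep).
have aw2 : adj G2 a w by apply: markov_equiv_adj; rewrite /adj aw.
have wb2 : adj G2 w b by apply: markov_equiv_adj; rewrite /adj bw orbT.
exists [:: w; b]; split => //.
rewrite /active_trail /= aw2 wb2 !inE negb_or ab (adj_neq dG2 aw2) (adj_neq dG2 wb2) /=.
by rewrite (negbTE ncol) wC.
Qed.

End MarkovEquivalence.

Section Pattern.
Variable d : nat.
Implicit Types pa : 'I_d -> {set 'I_d}.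

Definition pa_adj pa a b := (a \in pa b) || (b \in pa a).
Definition pa_vstruct pa a w b :=
  [&& a != b, a \in pa w, b \in pa w & ~~ pa_adj pa a b].
Definition pa_ranked pa (r : 'I_d -> nat) := forall i j, j \in pa i -> (r j < r i)%N.
Definition pa_acyclic pa := exists r, pa_ranked pa r.
Definition same_pattern pa1 pa2 :=
  (forall a b, pa_adj pa1 a b = pa_adj pa2 a b) /\
  (forall a w b, pa_vstruct pa1 a w b = pa_vstruct pa2 a w b).
Definition family_sum (V : zmodType) (J : {set 'I_d} -> V) pa :=
  (\sum_i (J (i |: pa i) - J (pa i)))%R.
Definition reversed_edges pa1 pa2 :=
  [set ab : 'I_d * 'I_d | (ab.1 \in pa1 ab.2) && (ab.2 \in pa2 ab.1)].

Lemma pa_vstructC pa a w b :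
  pa_vstruct pa a w b = pa_vstruct pa b w a.
Proof. by rewrite /pa_vstruct /pa_adj eq_sym orbC; congr (_ && _); apply: andbCA. Qed.

Lemma ranked_asym pa r i j : pa_ranked pa r -> j \in pa i -> i \in pa j -> False.
Proof. by move=> rP /rP ji /rP ij; lia. Qed.

Lemma ranked_irrefl pa r i : pa_ranked pa r -> i \notin pa i.
Proof. by move=> rP; apply/negP => /rP; rewrite ltnn. Qed.

Lemma same_adj_no_reversed_eq pa1 pa2 : (forall a b, pa_adj pa1 a b = pa_adj pa2 a b) ->
  reversed_edges pa1 pa2 = finset.set0 -> pa1 =1 pa2.
Proof.
move=> adjE E0 i; have norev a b : a \in pa1 b -> b \in pa2 a -> False.
  by move=> ab ba; have := finset.in_set0 (a, b); rewrite -E0 inE /= ab ba.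
apply/setP => x; have := adjE x i; rewrite /pa_adj.
by case: (boolP (x \in pa1 i)) (boolP (x \in pa2 i)) => [x1|x1] [x2|x2] //= => [/esym|] /norev; auto.
Qed.

End Pattern.

Section CoveredEdge.
Variables (d : nat) (pa1 pa2 : 'I_d -> {set 'I_d}) (r1 r2 : 'I_d -> nat).
Hypotheses (r1P : pa_ranked pa1 r1) (r2P : pa_ranked pa2 r2)
  (adjE : forall a b, pa_adj pa1 a b = pa_adj pa2 a b)
  (vsE : forall a w b, pa_vstruct pa1 a w b = pa_vstruct pa2 a w b).

Variable y : 'I_d.
Hypothesis y_top : forall z, y \in pa2 z -> pa1 z = pa2 z.

Lemma reversed_child_exists : pa1 y != pa2 y -> exists e, (y \in pa1 e) && (e \in pa2 y).
Proof.
rewrite finset.eqEsubset negb_and => /orP [] /subsetPn [e e1 e2].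
  have := adjE e y; rewrite /pa_adj e1 (negbTE e2) /= => /esym ye.
  by case: (ranked_asym r1P e1); rewrite y_top.
by exists e; have := adjE e y; rewrite /pa_adj e1 (negbTE e2) /= => ->.
Qed.

Variable c : 'I_d.
Hypotheses (yc : y \in pa1 c) (cy : c \in pa2 y)
  (c_min : forall e, y \in pa1 e -> e \in pa2 y -> (r1 c <= r1 e)%N).

(* A parent [x] of [c] not adjacent to [y] would make [x -> c <- y] a
   v-structure of [pa1], hence of [pa2], against [c -> y] in [pa2]. *)
Lemma covered_sub x : x \in pa1 c -> x != y -> x \in pa1 y.
Proof.
move=> xc xy.
have : pa_adj pa1 x y.
  apply/negPn/negP => nxy; have : pa_vstruct pa1 x c y by rewrite /pa_vstruct xy xc yc nxy.
  by rewrite vsE => /and4P [_ _ yc2 _]; apply: ranked_asym r2P cy yc2.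
case/orP => [// | yx].
have := adjE y x; rewrite /pa_adj yx /= => /esym /orP [yx2 | xy2].
  have := adjE x c; rewrite /pa_adj xc /= => /esym /orP [xc2 | cx2].
    by have := r2P cy; have := r2P yx2; have := r2P xc2; lia.
  by case: (ranked_asym r1P xc); rewrite y_top.
by have := c_min yx xy2; have := r1P xc; lia.
Qed.

Lemma covered_sup x : x \in pa1 y -> x \in pa1 c.
Proof.
move=> xy.
have x2 : x \in pa2 y.
  have := adjE x y; rewrite /pa_adj xy /= => /esym /orP [// | yx2].
  by case: (ranked_asym r1P xy); rewrite y_top.
have xc : x != c by apply: contraTneq xy => ->; apply/negP => /(ranked_asym r1P yc).
have : pa_adj pa1 x c.
  apply/negPn/negP => nxc; have : pa_vstruct pa2 x y c by rewrite /pa_vstruct xc x2 cy -adjE nxc.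
  by rewrite -vsE => /and4P [_ _ cy1 _]; apply: ranked_asym r1P yc cy1.
case/orP => [// | cx].
by have := r1P cx; have := r1P xy; have := r1P yc; lia.
Qed.

Lemma covered_edge : pa1 c = y |: pa1 y.
Proof.
apply/setP => x; rewrite in_setU1.
have [-> | xy] := eqVneq x y; first by rewrite yc.
rewrite /=; apply/idP/idP => [xc | /covered_sup //].
exact: covered_sub xc xy.
Qed.

End CoveredEdge.

(* Chickering's lemma: some reversed edge of two DAGs with the same pattern is
   covered. Take [y] with differing parent sets and no such node among its
   [pa2]-children, then the [r1]-least [c] with [y -> c] in [pa1] and [c -> y]
   in [pa2]. *)
Lemma exists_reversed_covered d (pa1 pa2 : 'I_d -> {set 'I_d}) r1 r2 :
  pa_ranked pa1 r1 -> pa_ranked pa2 r2 -> same_pattern pa1 pa2 ->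
  reversed_edges pa1 pa2 != finset.set0 ->
  exists y c, [/\ y \in pa1 c, c \in pa2 y & pa1 c = y |: pa1 y].
Proof.
move=> r1P r2P [adjE vsE] rev0.
have [[a b]] := set0Pn _ rev0; rewrite inE /= => /andP [ab ba].
have diff_b : pa1 b != pa2 b by apply: contraPneq (ranked_asym r2P ba) => <-.
have [y Py y_max] := @arg_maxnP _ b (fun i => pa1 i != pa2 i) r2 diff_b.
have y_top z : y \in pa2 z -> pa1 z = pa2 z.
  by move=> yz; apply/eqP/negPn/negP => /y_max; have := r2P _ _ yz; lia.
have [e ye] := reversed_child_exists r1P adjE y_top Py.
have [c /andP [yc cy] c_min] :=
  @arg_minnP _ e (fun e => (y \in pa1 e) && (e \in pa2 y)) r1 ye.
exists y, c; split => //.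
apply: (covered_edge r1P r2P adjE vsE y_top yc cy) => e' ye' e'y.
by apply: c_min; rewrite ye'.
Qed.

Section CoveredReversal.
Variables (d : nat) (pa : 'I_d -> {set 'I_d}) (r : 'I_d -> nat) (y c : 'I_d).
Hypotheses (rP : pa_ranked pa r) (yc : y \in pa c) (covered : pa c = y |: pa y).

Definition reverse_pa (i : 'I_d) : {set 'I_d} :=
  if i == y then c |: pa y else if i == c then pa y else pa i.

Lemma y_neq_c : y != c.
Proof. by apply: contraTneq yc => ->; apply: ranked_irrefl rP. Qed.

Lemma c_notin_pa_y : c \notin pa y.
Proof. by apply/negP => /(ranked_asym rP yc). Qed.

Lemma in_reverse_y x : (x \in reverse_pa y) = (x == c) || (x \in pa y).
Proof. by rewrite /reverse_pa eqxx in_setU1. Qed.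

Lemma in_reverse_c x : (x \in reverse_pa c) = (x \in pa y).
Proof. by rewrite /reverse_pa eq_sym (negbTE y_neq_c) eqxx. Qed.

Lemma reverse_pa_other i : i != y -> i != c -> reverse_pa i = pa i.
Proof. by move=> iy ic; rewrite /reverse_pa (negbTE iy) (negbTE ic). Qed.

Lemma in_pa_c x : (x \in pa c) = (x == y) || (x \in pa y).
Proof. by rewrite covered in_setU1. Qed.

Lemma in_reverse_pa x i : ~~ ((x == y) && (i == c)) -> ~~ ((x == c) && (i == y)) ->
  (x \in reverse_pa i) = (x \in pa i).
Proof.
have [-> | iy] := eqVneq i y; first by rewrite andbT => _ /negbTE xc; rewrite in_reverse_y xc.
have [-> | ic] := eqVneq i c; first by rewrite andbT => /negbTE xy _; rewrite in_reverse_c in_pa_c xy.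
by move=> _ _; rewrite reverse_pa_other.
Qed.

Lemma pa_adj_reverse a b : pa_adj reverse_pa a b = pa_adj pa a b.
Proof.
have [/andP [/eqP -> /eqP ->] | h1] := boolP ((a == y) && (b == c)).
  by rewrite /pa_adj in_reverse_y eqxx yc !orbT.
have [/andP [/eqP -> /eqP ->] | h2] := boolP ((a == c) && (b == y)).
  by rewrite /pa_adj in_reverse_y eqxx yc !orbT.
by rewrite /pa_adj !in_reverse_pa // andbC.
Qed.

Lemma pa_vstruct_off_edge a w b : pa_vstruct pa a w b ->
  ~~ ((a == y) && (w == c)) && ~~ ((a == c) && (w == y)).
Proof.
case/and4P => ab aw bw nadj; apply/andP; split; apply/andP => -[/eqP ea /eqP ew].
  move: bw; rewrite ew in_pa_c => /orP [/eqP eb | bpy]; first by rewrite ea eb eqxx in ab.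
  by move: nadj; rewrite /pa_adj ea bpy orbT.
by move: aw; rewrite ea ew (negbTE c_notin_pa_y).
Qed.

Lemma reverse_vstruct_off_edge a w b : pa_vstruct reverse_pa a w b ->
  ~~ ((a == y) && (w == c)) && ~~ ((a == c) && (w == y)).
Proof.
case/and4P => ab aw bw nadj; apply/andP; split; apply/andP => -[/eqP ea /eqP ew].
  by move: aw; rewrite ea ew in_reverse_c (negbTE (ranked_irrefl y rP)).
move: bw; rewrite ew in_reverse_y => /orP [/eqP eb | bpy]; first by rewrite ea eb eqxx in ab.
by move: nadj; rewrite pa_adj_reverse /pa_adj ea in_pa_c bpy !orbT.
Qed.

(* No v-structure of either pattern uses the edge between [y] and [c]: the
   other parent of such a collider would lie in [pa y], and so be adjacent to
   both [y] and [c]. *)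
Lemma pa_vstruct_reverse a w b : pa_vstruct reverse_pa a w b = pa_vstruct pa a w b.
Proof.
have offE P : (forall a w b, pa_vstruct P a w b ->
    ~~ ((a == y) && (w == c)) && ~~ ((a == c) && (w == y))) ->
  pa_vstruct P a w b -> pa_vstruct reverse_pa a w b = pa_vstruct pa a w b.
  move=> off vs; have /andP [a1 a2] := off _ _ _ vs.
  move: (vs); rewrite pa_vstructC => /off /andP [b1 b2].
  by rewrite /pa_vstruct pa_adj_reverse (in_reverse_pa a1 a2) (in_reverse_pa b1 b2).
apply/idP/idP => vs; first by rewrite -(offE _ reverse_vstruct_off_edge vs).
by rewrite (offE _ pa_vstruct_off_edge vs).
Qed.

(* Reversing [y -> c] keeps [r] a ranking once it is doubled, with [c] placed
   just below [y]. *)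
Lemma reverse_ranked : pa_ranked reverse_pa
  (fun i => if i == c then (r y).*2 else if i == y then (r y).*2.+1 else (r i).*2).
Proof.
have ryc := rP yc.
have notyc j : j \in pa y -> (j != y) && (j != c).
  by move=> jy; apply/andP; split; apply: contraTneq jy => ->;
     [exact: ranked_irrefl rP | exact: c_notin_pa_y].
move=> i j /=; have [-> | iy] := eqVneq i y.
  rewrite in_reverse_y (negbTE y_neq_c) => /orP [/eqP -> | jy]; first by rewrite eqxx.
  by case/andP: (notyc j jy) => /negbTE -> /negbTE ->; have := rP jy; lia.
have [-> | ic] := eqVneq i c.
  rewrite in_reverse_c => jy.
  by case/andP: (notyc j jy) => /negbTE -> /negbTE ->; have := rP jy; lia.
rewrite reverse_pa_other // => /rP.
by have [-> | _] := eqVneq j c; last have [-> | _] := eqVneq j y; lia.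
Qed.

Lemma family_sum_reverse (V : zmodType) (J : {set 'I_d} -> V) :
  family_sum J reverse_pa = family_sum J pa.
Proof.
have split3 (F : 'I_d -> V) :
    (\sum_i F i = F y + F c + \sum_(i | (i != y) && (i != c)) F i)%R.
  rewrite (bigD1 y) //= (bigD1 c) /=; last by rewrite eq_sym y_neq_c.
  by rewrite addrA; congr (_ + _)%R; apply: eq_bigl => i; rewrite andbC.
rewrite /family_sum split3 [RHS]split3; congr (_ + _)%R.
  rewrite /reverse_pa eqxx eq_sym (negbTE y_neq_c) eqxx covered finset.setUCA.
  by rewrite addrA subrK [RHS]addrC addrA subrK.
by apply: eq_bigr => i /andP [iy ic]; rewrite reverse_pa_other.
Qed.

End CoveredReversal.

Lemma reversed_edges_reverse d (pa pa2 : 'I_d -> {set 'I_d}) r r2 y c :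
  pa_ranked pa r -> y \in pa c -> pa c = y |: pa y ->
  pa_ranked pa2 r2 -> c \in pa2 y ->
  reversed_edges (reverse_pa pa y c) pa2 \proper reversed_edges pa pa2.
Proof.
move=> rP yc covered r2P cy2; apply/properP; split.
  apply/fintype.subsetP => -[a b]; rewrite !inE /= => /andP [ab ba]; rewrite ba andbT.
  have [/andP [/eqP ea /eqP eb] | h2] := boolP ((a == c) && (b == y)).
    by move: ba; rewrite ea eb => /(ranked_asym r2P cy2).
  have [/andP [/eqP ea /eqP eb] | h1] := boolP ((a == y) && (b == c)).
    by move: ab; rewrite ea eb (in_reverse_c rP yc) (negbTE (ranked_irrefl y rP)).
  by rewrite -(in_reverse_pa rP yc covered h1 h2).
exists (y, c); rewrite !inE /= ?yc ?cy2 //.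
by rewrite (in_reverse_c rP yc) (negbTE (ranked_irrefl y rP)).
Qed.

(* Chickering (1995): DAGs with the same skeleton and v-structures are joined
   by a sequence of covered edge reversals, none of which changes a sum of
   family terms; induct on the number of edges pointing the wrong way. *)
Theorem family_sum_same_pattern d (V : zmodType) (J : {set 'I_d} -> V) pa1 pa2 :
  pa_acyclic pa1 -> pa_acyclic pa2 -> same_pattern pa1 pa2 ->
  family_sum J pa1 = family_sum J pa2.
Proof.
move=> acyc1 [r2 r2P]; have [n] := ubnP #|reversed_edges pa1 pa2|.
elim: n pa1 acyc1 => // n IH pa [r rP] lt_n [adjE vsE].
have [rev0 | rev_ne0] := eqVneq (reversed_edges pa pa2) finset.set0.
  by apply: eq_bigr => i _; rewrite (same_adj_no_reversed_eq adjE rev0).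
have [y [c [yc cy covered]]] := exists_reversed_covered rP r2P (conj adjE vsE) rev_ne0.
rewrite -(family_sum_reverse rP yc covered); apply: IH.
- exact: ex_intro _ _ (reverse_ranked rP yc).
- by have := proper_card (reversed_edges_reverse rP yc covered r2P cy); lia.
- by split => *; rewrite ?(pa_adj_reverse rP yc covered) ?(pa_vstruct_reverse rP yc covered).
Qed.

Section ScoreEquivalence.
Local Open Scope ring_scope.
Variables (R : realType) (d k : nat).

Definition score_equivalent (h : fam d -> R) : Prop :=
  forall G1 G2 : graph d, is_dag k G1 -> is_dag k G2 -> markov_equiv G1 G2 ->
    score h G1 = score h G2.

Lemma score_parents (h : fam d -> R) (G : graph d) :
  is_dag k G -> score h G = - \sum_i h (i, parents G i).
Proof. by move=> dG; rewrite /score {1}(dag_imset dG) big_imset // => i j _ _ []. Qed.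

Lemma parents_acyclic (G : graph d) : is_dag k G -> pa_acyclic (parents G).
Proof.
move=> dG; exists (fun i => #|ancestors G i|) => i j.
by rewrite in_parents => ji; exact: (card_ancestors_lt dG ji).
Qed.

Lemma pa_adj_parents (G : graph d) a b : pa_adj (parents G) a b = adj G a b.
Proof. by rewrite /pa_adj !in_parents. Qed.

Lemma markov_equiv_same_pattern (G1 G2 : graph d) : is_dag k G1 -> is_dag k G2 ->
  markov_equiv G1 G2 -> same_pattern (parents G1) (parents G2).
Proof.
move=> dG1 dG2 eqG12; have eqG21 := markov_equiv_sym eqG12; split => [a b | a w b].
  rewrite !pa_adj_parents; apply/idP/idP.
    exact/(markov_equiv_adj dG1 dG2 eqG12).
  exact/(markov_equiv_adj dG2 dG1 eqG21).
have vs G G' : is_dag k G -> is_dag k G' -> markov_equiv G G' ->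
    pa_vstruct (parents G) a w b -> pa_vstruct (parents G') a w b.
  move=> dG dG' eqG; rewrite /pa_vstruct !pa_adj_parents !in_parents.
  case/and4P => ab aw bw nab.
  have /andP [-> ->] := markov_equiv_collider dG dG' eqG ab nab (introT andP (conj aw bw)).
  by rewrite ab /=; apply: contra nab => /(markov_equiv_adj dG' dG (markov_equiv_sym eqG)).
by apply/idP/idP; [apply: vs dG1 dG2 eqG12 | apply: vs dG2 dG1 eqG21].
Qed.

Lemma decomposable_score_equivalent (J : {set 'I_d} -> R) :
  score_equivalent (fun f => J (f.1 |: f.2) - J f.2).
Proof.
move=> G1 G2 dG1 dG2 eqG; rewrite !score_parents //; congr (- _).
exact: family_sum_same_pattern (parents_acyclic dG1) (parents_acyclic dG2)
  (markov_equiv_same_pattern dG1 dG2 eqG).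
Qed.

End ScoreEquivalence.
Local Open Scope ring_scope.

Section Emax.
Variables (R : realType) (d : nat) (Q : graph d -> Prop) (s : graph d -> R).

Lemma le_emax G : Q G -> ((s G)%:E <= emax Q s)%E.
Proof. by move=> QG; rewrite /emax (bigD1 G) ?le_max ?lexx //=; apply: asboolT. Qed.

Lemma emax_le x : (forall G, Q G -> s G <= x) -> (emax Q s <= x%:E)%E.
Proof.
move=> sx; apply: (big_ind (fun y => y <= x%:E)%E) => [|a b ax bx|G /asboolP QG].
- exact: leNye.
- by rewrite ge_max ax bx.
- by rewrite lee_fin sx.
Qed.

Lemma emax_eq G : Q G -> (forall G', Q G' -> s G' <= s G) -> emax Q s = (s G)%:E.
Proof. by move=> QG sG; apply/le_anti; rewrite emax_le // le_emax. Qed.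

End Emax.

Definition empty_dag d : graph d := [set (i, finset.set0) | i : 'I_d].

Lemma is_dag_empty d k : is_dag k (empty_dag d).
Proof.
apply/and3P; split.
- by apply/forall_inP => _ /imsetP [i _ ->]; rewrite /valid_fam inE cards0.
- apply/forallP => i; apply/cards1P; exists (i, finset.set0); apply/setP => f.
  rewrite !inE; apply/andP/eqP => [[/imsetP [j _ ->] /= /eqP -> //] | ->].
  by split => //; apply/imsetP; exists i.
- apply/forallP => i; apply/forallP => j; apply/implyP.
  by case/exists_inP => _ /imsetP [l _ ->]; rewrite inE andbF.
Qed.

Lemma exists_max_dag (R : realType) d k (s : graph d -> R) :
  exists2 G, is_dag k G & forall G', is_dag k G' -> s G' <= s G.
Proof.
have [G dG s_max] := @arg_maxP _ R _ (empty_dag d) (is_dag k) s (is_dag_empty d k).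
by exists G => // G'; apply: s_max.
Qed.

Section Estimates.
Variables (R : realType) (d k : nat) (H Hh : fam d -> R) (A : graph d).

Lemma parents_chld_eq G1 G2 i : Gj k A G1 -> Gj k A G2 -> i \in chld A ->
  parents G1 i = parents G2 i.
Proof.
case/andP => dG1 AG1 /andP [dG2 AG2] /imsetP [f fA ->].
have e1 := dag_famE dG1 (fintype.subsetP AG1 f fA).
have e2 := dag_famE dG2 (fintype.subsetP AG2 f fA).
by case: (etrans (esym e1) e2).
Qed.

(* Families of the settled children agree in [Gh] and [Gs]; every other child
   contributes at most [e] to the estimation error of the score difference. *)
Lemma score_gap_le Gh Gs (e : R) : Gj k A Gh -> Gj k A Gs ->
  score H Gh <= score H Gs ->
  (forall f, active_fam k (chld A) f -> `|Hh f - H f| <= e / 2) ->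
  score Hh Gh - score Hh Gs <= (d - #|chld A|)%:R * e.
Proof.
move=> GjH GjS HS acc; have /andP [dH _] := GjH; have /andP [dS _] := GjS.
pose dev f := Hh f - H f.
pose err i := dev (i, parents Gs i) - dev (i, parents Gh i).
have err_le i : err i <= if i \in chld A then 0 else e.
  rewrite /err /dev; case: ifP => iA.
    by rewrite (parents_chld_eq GjS GjH iA) subrr.
  have active G : is_dag k G -> active_fam k (chld A) (i, parents G i).
    by move=> dG; rewrite /active_fam iA (dag_valid dG (dag_parents_fam dG i)).
  have := acc _ (active Gs dS); have := acc _ (active Gh dH).
  rewrite !ler_norml /= => /andP [? ?] /andP [? ?]; lra.
have gapE : score Hh Gh - score Hh Gs = score H Gh - score H Gs + \sum_i err i.
  by rewrite !(score_parents _ dH) !(score_parents _ dS) /err /dev !sumrB; lra.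
have err_sum : \sum_i err i <= (d - #|chld A|)%:R * e.
  apply: le_trans (ler_sum _ (fun i _ => err_le i)) _.
  have <- : \sum_(i in ~: chld A) e = \sum_i (if i \in chld A then 0 else e).
    by rewrite big_mkcond; apply: eq_bigr => i _; rewrite finset.in_setC if_neg.
  have cardC : #|~: chld A| = (d - #|chld A|)%N by have := cardsC (chld A); rewrite card_ord; lia.
  by rewrite sumr_const mulr_natl cardC.
by rewrite gapE -[X in _ <= X]add0r lerD // subr_le0.
Qed.

End Estimates.

Lemma accept_preserves_optimum (R : realType) d k (H Hh : fam d -> R)
    (A Ghat Gs : graph d) (e : R) (f : fam d) :
  score_equivalent k H ->
  Gj k A Ghat -> (forall G, Gj k A G -> score Hh G <= score Hh Ghat) ->
  Gj k A Gs -> (forall G, is_dag k G -> score H G <= score H Gs) ->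
  (forall g, active_fam k (chld A) g -> `|Hh g - H g| <= e / 2) ->
  acceptable k Hh ((d - #|chld A|)%:R * e) A Ghat f ->
  exists2 G, Gj k (f |: A) G & score H G = score H Gs.
Proof.
move=> equivH GjH Hh_max GjS Gs_max acc [_ _ accept].
have /andP [dS _] := GjS; have /andP [dH _] := GjH.
have SGs : ec_j k A Gs Gs by split; last exact: markov_equiv_refl.
have [|G [[/andP [dG AG] eqG] fG]] := accept Gs dS (ex_intro _ Gs SGs).
  have emax_gap := leeB (emax_le (fun G (GG : ec_j k A Ghat G) => Hh_max G GG.1))
    (le_emax (score Hh) SGs).
  apply: le_trans emax_gap _; rewrite -EFinB lee_fin.
  exact: score_gap_le GjH GjS (Gs_max _ dH) acc.
exists G; last exact/esym/equivH.
by rewrite /Gj dG finset.subUset finset.sub1set fG AG.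
Qed.

Section Run.
Variables (R : realType) (d k : nat) (eps eps1 : R) (Hhat : nat -> fam d -> R)
  (J : nat) (A : nat -> graph d) (rd : nat -> nat) (Ghat : nat -> graph d).
Hypothesis run : run_prefix k eps eps1 Hhat J A rd Ghat.

Lemma run_round_start j : (1 <= j < J)%N -> exists j0, [/\ (1 <= j0 <= j)%N,
  rd j0 = rd j, (j0 == 1%N) || (rd j0.-1 < rd j0)%N & A j0 \subset A j].
Proof.
case: run => _ _ _ step; elim: j => [// | [|j] IH] /andP [_ jJ].
  by exists 1%N.
have [|j0 [j0j rd_j0 start_j0 A_j0]] := IH; first by rewrite /= ltnW.
have /= [_ _ [[f [_ [AS rdS]]] | [_ [_ [rdS _]]]]] := step j.+1 (ltnW jJ).
  exists j0; split; rewrite ?rdS ?AS //; first lia.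
  exact: fintype.subset_trans A_j0 (finset.subsetU1 _ _).
by exists j.+2; rewrite rdS /= ?leqnn ?ltnSn ?orbT.
Qed.

(* [V] only grows within a round, so the families active at iteration [j] were
   already active when its round started. *)
Lemma run_estimate H : event_E k eps1 H Hhat J A rd ->
  forall j, (1 <= j < J)%N -> forall f, active_fam k (chld (A j)) f ->
    `|Hhat (rd j) f - H f| <= epst eps1 (rd j) / 2.
Proof.
move=> eventE j jJ f /andP [valid_f fj].
have [j0 [j0j <- start_j0 A_j0]] := run_round_start jJ.
apply: eventE; rewrite ?start_j0 //; first lia.
by rewrite /active_fam valid_f; apply: contra fj; apply/fintype.subsetP/imsetS.
Qed.

End Run.

Theorem lemma2 (R : realType) (d k : nat) (Omega T : finType)
  (P : Omega -> R) (X : 'I_d -> Omega -> T) (eps eps1 : R)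
  (Hhat : nat -> fam d -> R) (J : nat) (A : nat -> graph d)
  (rd : nat -> nat) (Ghat : nat -> graph d) :
  (0 < k)%N -> is_pmf P -> 0 < eps -> 0 < eps1 ->
  run_prefix k eps eps1 Hhat J A rd Ghat ->
  event_E k eps1 (cond_entropy P X) Hhat J A rd ->
  (1 <= J)%N ->
  exists G : graph d, Gj k (A J) G /\
    ((score (cond_entropy P X) G)%:E
      = emax (fun G' => is_dag k G') (score (cond_entropy P X)))%E.
Proof.
move=> _ _ _ _ run eventE J1; set H := cond_entropy P X.
have equivH : score_equivalent k H := decomposable_score_equivalent (joint_entropy P X).
have [Gopt dopt opt] := exists_max_dag k (score H).
rewrite (emax_eq dopt opt).
suff /(_ J) : forall j, (1 <= j <= J)%N ->
    exists2 G, Gj k (A j) G & score H G = score H Gopt.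
  by rewrite J1 leqnn => /(_ isT) [G GjG GE]; exists G; rewrite GE.
have [A1 _ _ step] := run.
elim=> [// | [_ | j IH] /andP [_ jJ]].
  by exists Gopt => //; rewrite /Gj A1 dopt finset.sub0set.
have [|G GjG GE] := IH; first by rewrite /= ltnW.
have /= [GjH Hh_max [[f [acc [-> _]]] | [_ [-> _]]]] := step j.+1 jJ; last by exists G.
have G_max G' : is_dag k G' -> score H G' <= score H G by rewrite GE; apply: opt.
have [G' GjG' G'E] := accept_preserves_optimum equivH GjH Hh_max GjG G_max
  (run_estimate run eventE (j := j.+1) jJ) acc.
by exists G' => //; rewrite G'E.
Qed.
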